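(* Let $n\ge4$ be even. Let $G$ have node set $\{w_0,w_1,\dots,w_{n/2}\}\cup W'$ with $|W'|=n/2-1$ (disjoint), and edges $(w_i,w_{i-1})$ for $1\le i\le n/2$ together with $(w_i,x)$ for every $1\le i\le n/2$ and every $x\in W'$ (so $d_+(w_i)=n/2$ for $1\le i\le n/2$). Consider the \textsc{Random Pick} process from the initial state in which only $w_0$ is colored. Then with probability at least $1-8/n$, the convergence time is at least $n^2/8$.
   Context: A state is a map $V\to\{b,r,u\}$ (blue, red, uncolored); colored means blue or red. \textsc{Random Pick} process: in each round $t$ every node with at least one out-neighbor picks an out-neighbor uniformly at random, independently; an uncolored node adopts the color of its pick if the pick is colored, and all other nodes keep their color. A state is stable if no uncolored node has a colored out-neighbor; the convergence time is the first round $t\ge0$ at which the state is stable. *)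

From mathcomp Require Import all_boot all_order all_algebra.
Set Implicit Arguments. Unset Strict Implicit. Unset Printing Implicit Defensive.
Import GRing.Theory Num.Theory.

Inductive color := Blue | Red | Uncolored.
Definition colored (c : color) : bool :=
  match c with Uncolored => false | _ => true end.

(* A directed graph on a finite node type V is a relation E; E v w means
   w is an out-neighbor of v. *)
Definition has_out (V : finType) (E : rel V) (v : V) : bool := [exists w, E v w].

(* One round of Random Pick, given the picks p (p v is the out-neighbor
   picked by v; irrelevant for nodes without out-neighbors). *)
Definition step (V : finType) (E : rel V) (s : V -> color) (p : V -> V) : V -> color :=
  fun v => if ~~ colored (s v) && has_out E v && colored (s (p v))
           then s (p v) else s v.

Definition stable (V : finType) (E : rel V) (s : V -> color) : bool :=
  [forall v, forall w, (~~ colored (s v) && E v w) ==> ~~ colored (s w)].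

Definition valid_pick (V : finType) (E : rel V) (p : {ffun V -> V}) : bool :=
  [forall v, if has_out E v then E v (p v) else p v == v].

(* Sample space of the picks of the first N rounds (round k+1 uses f k).
   The uniform measure on this set is exactly the product of independent
   uniform picks. *)
Definition pick_seqs (V : finType) (E : rel V) (N : nat)
  : {set {ffun 'I_N -> {ffun V -> V}}} :=
  [set f : {ffun 'I_N -> {ffun V -> V}} | [forall i : 'I_N, valid_pick E (f i)]].

Definition round_pick (V : finType) (N : nat) (f : {ffun 'I_N -> {ffun V -> V}})
  (k : nat) : V -> V :=
  match (insub k : option 'I_N) with Some i => (f i : V -> V) | None => id end.

Fixpoint state_at (V : finType) (E : rel V) (N : nat) (s0 : V -> color)
  (f : {ffun 'I_N -> {ffun V -> V}}) (t : nat) : V -> color :=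
  match t with
  | 0 => s0
  | t'.+1 => step E (state_at E s0 f t') (round_pick f t')
  end.

Definition prob (V : finType) (E : rel V) (N : nat)
  (A : pred {ffun 'I_N -> {ffun V -> V}}) : rat :=
  (#|[set f in pick_seqs E N | A f]|%:R / #|pick_seqs E N|%:R)%R.

(* The graph of the theorem on node set 'I_n: node i (0 <= i <= n/2) is w_i,
   nodes n/2+1 .. n-1 form W' (n/2 - 1 nodes). *)
Definition GE (n : nat) : rel 'I_n :=
  fun v w => (0 < v) && (v <= n./2) && ((w.+1 == v) || (n./2 < w)).

Definition init (n : nat) : 'I_n -> color :=
  fun v => if nat_of_ord v == 0 then Blue else Uncolored.

(* Event "convergence time >= n^2/8": the state is not stable at every
   round t with t < n^2/8 (horizon n^2 rounds suffices). *)
Definition slow_event (n : nat) : pred {ffun 'I_(n ^ 2) -> {ffun 'I_n -> 'I_n}} :=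
  fun f => [forall t : 'I_(n ^ 2), (8 * t < n ^ 2) ==> ~~ stable (@GE n) (state_at (@GE n) (@init n) f t)].

From mathcomp Require Import all_boot all_order all_algebra.
From mathcomp Require Import zify ring lra.
Import Order.TTheory GRing.Theory Num.Theory.
Set Implicit Arguments. Unset Strict Implicit. Unset Printing Implicit Defensive.
Local Open Scope ring_scope.

(* Write m = n/2.  The nodes of W' have no out-neighbors, so they stay
   uncolored forever, and at every round the colored nodes are exactly a
   prefix w_0, ..., w_c of the path.  The prefix grows precisely when w_(c+1)
   picks w_c, an event of probability 1/m, and the state is not stable as
   long as c < m.  Counting these events with independent coins, also after
   the path is fully colored, c_t is binomial with parameters t and 1/m, so
   after T ~ m^2/2 rounds its mean and variance are at most m/2, and
   Chebyshev's inequality gives P(c_T >= m) <= 2/m = 4/n. *)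

Definition ffun_upd (I T : finType) (f : {ffun I -> T}) (i : I) (x : T) : {ffun I -> T} :=
  [ffun j => if j == i then x else f j].

(* Resampling coordinate [i] of a point of the product set [prod_j D j]
   is a bijection [(f, x) <-> (ffun_upd f i x, f i)] of [prod_j D j * D i]. *)
Lemma sum_family_upd (I T : finType) (R : nmodType) (D : I -> pred T) (i : I)
    (F : {ffun I -> T} -> R) :
  \sum_(f : {ffun I -> T} | [forall j, D j (f j)]) \sum_(x | D i x) F (ffun_upd f i x) =
  (\sum_(f : {ffun I -> T} | [forall j, D j (f j)]) F f) *+ #|D i|.
Proof.
set P := fun f : {ffun I -> T} => [forall j, D j (f j)].
transitivity (\sum_(f | P f) \sum_(x | D i x) F f); last first.
  by rewrite -sumrMnl; apply: eq_bigr => f _; rewrite sumr_const.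
rewrite !pair_big /=.
pose h (u : {ffun I -> T} * T) := (ffun_upd u.1 i u.2, u.1 i).
have hK : involutive h.
  by case=> f x; rewrite /h /ffun_upd /= ffunE eqxx; congr pair; apply/ffunP=> j;
     rewrite !ffunE; case: eqP => // ->.
rewrite (reindex_inj (inv_inj hK)) /=.
apply: eq_big => -[f x] /=; rewrite /ffun_upd; last first.
  by move=> _; congr F; apply/ffunP=> j; rewrite !ffunE; case: eqP => // ->.
rewrite /P; apply/andP/andP => -[/forallP Df Dx]; split=> //.
- apply/forallP=> j; case: (eqVneq j i) => [->//|nji].
  by have := Df j; rewrite ffunE (negbTE nji).
- by have := Df i; rewrite ffunE eqxx.
- by apply/forallP=> j; rewrite ffunE; case: eqP => [->|_]; last exact: Df.
Qed.

Lemma card_tail_mul_sqr_le (R : realFieldType) (T : finType) (A E : pred T)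
    (X : T -> R) (mu a : R) :
  mu <= a -> {in A, forall x, E x -> a <= X x} ->
  #|[predI A & E]|%:R * (a - mu) ^+ 2 <= \sum_(x in A) (X x - mu) ^+ 2.
Proof.
move=> mu_le_a tailE; rewrite -sum1_card natr_sum mulr_suml.
rewrite big_mkcond [leRHS]big_mkcond /=; apply: ler_sum => x _.
rewrite inE; case Ax: (x \in A) => //=; case: ifP => [Ex|_]; last exact: sqr_ge0.
have aX : a <= X x := tailE x Ax Ex.
by rewrite mul1r ler_sqr ?nnegrE ?subr_ge0 ?lerB //; apply: le_trans aX.
Qed.

Lemma card_ord_pred K (P : pred nat) :
  #|[pred x : 'I_K | P x]| = (\sum_(0 <= x < K) P x)%N.
Proof.
by rewrite -sum1_card big_mkord big_mkcond /=; apply: eq_bigr => i _; rewrite inE; case: (P i).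
Qed.

Lemma sum_nat_gtn K c : (\sum_(0 <= x < K) (c < x : nat))%N = (K - c.+1)%N.
Proof.
elim: K => [|K IH]; first by rewrite big_geq.
by rewrite big_nat_recr //= IH; case: ltnP; lia.
Qed.

Lemma sum_nat_eq K j : (\sum_(0 <= x < K) (x == j : nat))%N = (j < K)%N.
Proof.
elim: K => [|K IH]; first by rewrite big_geq.
by rewrite big_nat_recr //= IH; case: ltngtP; lia.
Qed.

Definition pick_range (V : finType) (E : rel V) (v : V) : pred V :=
  fun w => if has_out E v then E v w else w == v.

Lemma valid_pick_exists (V : finType) (E : rel V) : exists p, valid_pick E p.
Proof.
exists [ffun v => odflt v [pick w | E v w]]; apply/forallP=> v; rewrite ffunE.
case: pickP => [w Evw|noE] /=; first by case: ifP => // /existsP[]; exists w.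
by case: ifP => // /existsP[w]; rewrite noE.
Qed.

Lemma round_pick_legal (V : finType) (E : rel V) N (f : {ffun 'I_N -> {ffun V -> V}}) t v :
  f \in pick_seqs E N -> E v (round_pick f t v) || (round_pick f t v == v).
Proof.
rewrite /round_pick inE; case: insubP => [i _ _|_ _]; last by rewrite eqxx orbT.
by move/forallP/(_ i)/forallP/(_ v); case: (has_out E v) => ->; rewrite ?orbT.
Qed.

Lemma round_pick_upd (V : finType) N (f : {ffun 'I_N -> {ffun V -> V}}) (i : 'I_N) p s :
  (s < i)%N -> round_pick (ffun_upd f i p) s = round_pick f s.
Proof.
rewrite /round_pick; case: insubP => [j _ <-|//] ltji.
by rewrite ffunE; case: eqP => // eji; rewrite eji ltnn in ltji.
Qed.

Lemma round_pick_upd_eq (V : finType) N (f : {ffun 'I_N -> {ffun V -> V}}) (i : 'I_N) p :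
  round_pick (ffun_upd f i p) i = p.
Proof. by rewrite /round_pick valK ffunE eqxx. Qed.

Lemma pick_seqs_card_gt0 (V : finType) (E : rel V) N : (0 < #|pick_seqs E N|)%N.
Proof.
have [p0 p0_legal] := valid_pick_exists E.
by apply/card_gt0P; exists [ffun=> p0]; rewrite inE; apply/forallP => i; rewrite ffunE.
Qed.

Lemma prob_mono (V : finType) (E : rel V) N (A B : pred {ffun 'I_N -> {ffun V -> V}}) :
  (forall f, f \in pick_seqs E N -> A f -> B f) -> prob E A <= prob E B.
Proof.
move=> AB; rewrite /prob ler_wpM2r ?invr_ge0 ?ler0n // ler_nat.
apply/subset_leq_card/subsetP => f; rewrite !inE => /andP[fE Af].
by rewrite fE (AB f) ?inE.
Qed.

Lemma prob_ge_compl (V : finType) (E : rel V) N (A : pred {ffun 'I_N -> {ffun V -> V}}) c :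
  #|[set f in pick_seqs E N | ~~ A f]|%:R <= c * #|pick_seqs E N|%:R -> 1 - c <= prob E A.
Proof.
set Omega := pick_seqs E N => bad_le.
have Omega_gt0 : 0 < #|Omega|%:R :> rat by rewrite ltr0n pick_seqs_card_gt0.
have : #|[set f in Omega | A f]| + #|[set f in Omega | ~~ A f]| = #|Omega|.
  rewrite -(cardsID [set f | A f] Omega).
  by congr (_ + _); apply: eq_card => f; rewrite !inE // andbC.
move/(congr1 (fun x => x%:R : rat)); rewrite natrD => split_Omega.
by rewrite /prob ler_pdivlMr // mulrBl mul1r; lra.
Qed.

Section Chain.

Variable k : nat.
Hypothesis k_ge3 : (3 <= k)%N.

Local Notation n := k.+1.
Local Notation m := k.+1./2.
Local Notation G := (@GE k.+1).

Lemma has_out_GE (v : 'I_n) : has_out G v -> (0 < v <= m)%N.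
Proof. by case/existsP=> w /andP[]. Qed.

Lemma GE_pred (j : nat) : (j < m)%N -> G (inord j.+1) (inord j).
Proof. by move=> ltjm; rewrite /GE !inordK; lia. Qed.

Lemma has_out_pred (j : nat) : (j < m)%N -> has_out G (inord j.+1).
Proof. by move=> ltjm; apply/existsP; exists (inord j); apply: GE_pred. Qed.

Definition front_state (c : nat) : 'I_n -> color :=
  fun v => if (v <= c)%N then Blue else Uncolored.

Lemma colored_front_state c v : colored (front_state c v) = (v <= c)%N.
Proof. by rewrite /front_state; case: leqP. Qed.

Definition advance (p : 'I_n -> 'I_n) (j : nat) : bool := p (inord j.+1) == inord j.

Section Step.

Variable p : 'I_n -> 'I_n.
Hypothesis p_legal : forall v, G v (p v) || (p v == v).

Lemma pick_colored_front (c : nat) (v : 'I_n) : (c < m)%N -> (c < v)%N ->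
  has_out G v && (p v <= c)%N = (v == c.+1 :> nat) && advance p c.
Proof.
move=> ltcm ltcv; apply/andP/andP => [[/has_out_GE v_le pv_le] | [/eqP vE /eqP pvE]].
  have pvE : (p v).+1 = v.
    case/orP: (p_legal v) => [/andP[_ /orP[/eqP //|]] | /eqP pvv]; first lia.
    by rewrite pvv in pv_le; lia.
  have ev : v = inord c.+1 by apply/val_inj; rewrite /= inordK; lia.
  split; first by rewrite ev inordK; lia.
  by rewrite /advance -ev; apply/eqP/val_inj; rewrite /= inordK; lia.
have ev : v = inord c.+1 by apply/val_inj; rewrite /= inordK; lia.
by rewrite ev has_out_pred // pvE inordK //; lia.
Qed.

Lemma step_front_state (c : nat) :
  step G (front_state (minn c m)) p =1 front_state (minn (c + advance p (minn c m.-1)) m).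
Proof.
move=> v; rewrite /step !colored_front_state.
case: (leqP m c) => [le_mc | lt_cm].
  rewrite (minn_idPr (leq_trans le_mc (leq_addr _ _))).
  case: leqP => //= lt_mv; case hv: (has_out G v) => //=.
  by have := has_out_GE hv; lia.
rewrite (minn_idPl (_ : c <= m.-1)%N); last by lia.
rewrite (minn_idPl (_ : c + advance p c <= m)%N); last by case: advance; lia.
case: (leqP v c) => [le_vc | lt_cv] /=.
  by rewrite /front_state le_vc (leq_trans le_vc (leq_addr _ _)).
rewrite pick_colored_front //; case adv: (advance p c); last by rewrite andbF addn0.
rewrite andbT addn1 /front_state; case: eqP => [vE | vNE].
  have ltcn : (c < n)%N by lia.
  have ev : v = inord c.+1 by apply/val_inj; rewrite /= inordK; lia.
  by move/eqP: adv; rewrite /advance -ev vE leqnn => ->; rewrite inordK ?leqnn.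
have -> : (v <= c.+1)%N = false by lia.
by rewrite leqNgt lt_cv.
Qed.

End Step.

(* The advance test is still evaluated once the path is fully colored (hence
   the [minn _ m.-1]), so that [front f t] is a sum of [t] independent coins
   of bias [1/m]; only [minn (front f t) m] is the actual prefix length. *)
Fixpoint front N (f : {ffun 'I_N -> {ffun 'I_n -> 'I_n}}) (t : nat) : nat :=
  if t is t'.+1 then front f t' + advance (round_pick f t') (minn (front f t') m.-1)
  else 0.

Lemma state_at_front N (f : {ffun 'I_N -> {ffun 'I_n -> 'I_n}}) t :
  f \in pick_seqs G N -> state_at G (@init n) f t =1 front_state (minn (front f t) m).
Proof.
move=> f_legal; elim: t => [|t IH] v /=; first by rewrite /init /front_state min0n leqn0.
transitivity (step G (front_state (minn (front f t) m)) (round_pick f t) v).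
  by rewrite /step !IH.
by apply: step_front_state => w; apply: round_pick_legal.
Qed.

Lemma front_mono N (f : {ffun 'I_N -> {ffun 'I_n -> 'I_n}}) :
  {homo front f : s t / (s <= t)%N}.
Proof. by apply: homo_leq => [//|s t u|t]; [apply: leq_trans | apply: leq_addr]. Qed.

Lemma front_upd N (f : {ffun 'I_N -> {ffun 'I_n -> 'I_n}}) (i : 'I_N) p s :
  (s <= i)%N -> front (ffun_upd f i p) s = front f s.
Proof. by elim: s => [//|s IH] lt_si /=; rewrite IH ?round_pick_upd // ltnW. Qed.

Lemma front_upd_succ N (f : {ffun 'I_N -> {ffun 'I_n -> 'I_n}}) (i : 'I_N) p :
  front (ffun_upd f i p) i.+1 = front f i + advance p (minn (front f i) m.-1).
Proof. by rewrite /= front_upd // round_pick_upd_eq. Qed.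

Lemma slow_of_front (f : {ffun 'I_(n ^ 2) -> {ffun 'I_n -> 'I_n}}) :
  f \in pick_seqs G (n ^ 2) -> (front f ((n ^ 2).-1 %/ 8) < m)%N -> slow_event f.
Proof.
move=> f_legal front_lt; apply/forallP => t; apply/implyP => small_t.
have lt_front : (front f t < m)%N.
  apply: leq_ltn_trans front_lt; apply: front_mono.
  by rewrite leq_divRL // mulnC -ltnS prednK ?expn_gt0.
set c := front f t in lt_front *.
apply/negP => /forallP/(_ (inord c.+1))/forallP/(_ (inord c))/implyP.
rewrite !state_at_front // !colored_front_state (minn_idPl (ltnW lt_front)) GE_pred //.
by rewrite !inordK ?ltnn ?leqnn //; lia.
Qed.

Hypothesis k_odd : odd k.

Lemma card_pick_range_pred j : (j < m)%N -> #|pick_range G (inord j.+1)| = m.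
Proof.
move=> ltjm; have ltjk : (j < k)%N by lia.
transitivity #|[pred x : 'I_n | (x == j :> nat) || (m < x)%N]|.
  apply: eq_card => x; rewrite !inE /pick_range has_out_pred // /GE inordK; last lia.
  by rewrite unfold_in /= eqSS ltjm.
rewrite (card_ord_pred n (fun x => (x == j) || (m < x))%N).
rewrite (eq_bigr (fun x => (x == j) + (m < x))%N); last first.
  by move=> x _; case: eqP => [->|] //=; rewrite ltnNge (ltnW ltjm).
have := odd_double_half k; rewrite k_odd big_split /= sum_nat_eq sum_nat_gtn; lia.
Qed.

Lemma sum_advance j : (j < m)%N ->
  (\sum_(p : {ffun 'I_n -> 'I_n} | valid_pick G p) (advance p j)%:R) *+ m =
  \sum_(p : {ffun 'I_n -> 'I_n} | valid_pick G p) 1 :> rat.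
Proof.
move=> ltjm; have := sum_family_upd (pick_range G) (inord j.+1) (fun p => (advance p j)%:R : rat).
rewrite card_pick_range_pred // => <-; apply: eq_bigr => p _.
rewrite (bigD1 (inord j)) /=; last by rewrite /pick_range has_out_pred // GE_pred.
rewrite /advance ffunE !eqxx big1 ?addr0 // => x /andP[_ /negbTE xNj].
by rewrite ffunE eqxx xNj.
Qed.

Section Moments.

Variable N : nat.

Local Notation Omega := (pick_seqs G N).
Local Notation W := (#|Omega|%:R : rat).
Local Notation q := (m%:R^-1 : rat).

Lemma sum_front_succ (h : nat -> rat) t : (t < N)%N ->
  \sum_(f in Omega) h (front f t.+1) =
  (1 - q) * \sum_(f in Omega) h (front f t) + q * \sum_(f in Omega) h (front f t).+1.
Proof.
move=> lt_tN; set i : 'I_N := Ordinal lt_tN.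
have m_neq0 : m%:R != 0 :> rat by rewrite pnatr_eq0; lia.
have [p0 p0_legal] := valid_pick_exists G.
set picks := \sum_(p : {ffun 'I_n -> 'I_n} | valid_pick G p) (1 : rat).
have picks_neq0 : picks != 0.
  by rewrite /picks sumr_const -mulr_natr mul1r pnatr_eq0 -lt0n; apply/card_gt0P; exists p0.
have sum_Omega F : \sum_(f in Omega) F f =
    \sum_(f : {ffun 'I_N -> {ffun 'I_n -> 'I_n}} | [forall j, valid_pick G (f j)]) F f.
  by apply: eq_bigl => f; rewrite inE.
rewrite !sum_Omega !mulr_sumr -big_split; apply: (mulIf picks_neq0).
rewrite {1}/picks sumr_const mulr_natr -(sum_family_upd (fun=> valid_pick G) i) mulr_suml.
apply: eq_bigr => f _.
set c := front f t; set g := minn c m.-1.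
transitivity (\sum_(p | valid_pick G p)
  ((advance p g)%:R * h c.+1 + (1 - (advance p g)%:R) * h c)).
  apply: eq_bigr => p _; have -> : front (ffun_upd f i p) t.+1 = (c + advance p g)%N.
    exact: front_upd_succ.
  by case: advance; rewrite ?addn1 ?addn0 /= ?subrr ?subr0 ?mul1r ?mul0r ?addr0 ?add0r.
rewrite big_split /= -!mulr_suml sumrB -/picks.
have -> : \sum_(p | valid_pick G p) (advance p g)%:R = picks / m%:R.
  by apply: (mulIf m_neq0); rewrite mulr_natr sum_advance /g ?divfK //; lia.
by field.
Qed.

Lemma sum_Omega_const (x : rat) : \sum_(f in Omega) x = x * W.
Proof. by rewrite sumr_const mulr_natr. Qed.

Lemma sum_front t : (t <= N)%N -> \sum_(f in Omega) (front f t)%:R = t%:R * q * W.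
Proof.
elim: t => [_|t IH lt_tN]; first by rewrite big1 ?mul0r.
rewrite (sum_front_succ (fun x => x%:R)) //.
under [X in _ + _ * X]eq_bigr do rewrite -natr1.
by rewrite big_split /= IH ?sum_Omega_const 1?ltnW // -natr1; ring.
Qed.

Lemma sum_front_sqr t : (t <= N)%N ->
  \sum_(f in Omega) (front f t)%:R ^+ 2 = (t%:R * q + t%:R * (t%:R - 1) * q ^+ 2) * W.
Proof.
elim: t => [_|t IH lt_tN]; first by rewrite big1 ?mul0r ?add0r // => f _; rewrite expr0n.
rewrite (sum_front_succ (fun x => x%:R ^+ 2)) //.
under [X in _ + _ * X]eq_bigr do rewrite -natr1 sqrrD1.
by rewrite !big_split /= IH ?sum_front ?sum_Omega_const 1?ltnW // -natr1; ring.
Qed.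

Lemma card_front_tail T : (T <= N)%N -> (2 * T <= m ^ 2)%N ->
  #|[set f in Omega | ~~ (front f T < m)%N]|%:R <= 2 / m%:R * W.
Proof.
move=> le_TN le_2T_m2; set M : rat := m%:R; set mu := T%:R * q.
set bad := #|[set f in Omega | _]|%:R.
have M_gt0 : 0 < M by rewrite ltr0n; lia.
have mu_le : mu <= M / 2.
  have : 2 * T%:R <= M ^+ 2 by rewrite -natrX -(natrM _ 2) ler_nat.
  by rewrite /mu ler_pdivrMr // (_ : M / 2 * M = M ^+ 2 / 2); [lra | field].
have var : \sum_(f in Omega) ((front f T)%:R - mu) ^+ 2 = (mu - mu * q) * W.
  rewrite (eq_bigr (fun f => (front f T)%:R ^+ 2 - 2 * mu * (front f T)%:R + mu ^+ 2)).
    rewrite !big_split sumrN -mulr_sumr sum_front_sqr ?sum_front ?sum_Omega_const // /mu /=.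
    (* [/=] unfolded [m] to [uphalf k]; fold it back so that [ring] sees one atom *)
    rewrite -[uphalf k]/(k.+1./2); ring.
  by move=> f _; ring.
have cheb : bad * (M - mu) ^+ 2 <= (mu - mu * q) * W.
  have mu_le_M : mu <= M by lra.
  have tailP : {in [pred f | f \in Omega], forall f,
      ~~ (front f T < m)%N -> M <= (front f T)%:R} by move=> f _; rewrite -leqNgt ler_nat.
  rewrite -var; apply: le_trans (card_tail_mul_sqr_le mu_le_M tailP).
  by rewrite ler_wpM2r ?sqr_ge0 // ler_nat; apply/subset_leq_card/subsetP => f; rewrite !inE.
have q_ge0 : 0 <= q by rewrite invr_ge0 ler0n.
have key : bad * (M ^+ 2 / 4) <= M / 2 * W.
  apply: le_trans (_ : bad * (M - mu) ^+ 2 <= _).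
    rewrite ler_wpM2l ?ler0n // (_ : M ^+ 2 / 4 = (M / 2) ^+ 2); last by field.
    by rewrite ler_sqr ?nnegrE; lra.
  apply: le_trans cheb _; rewrite ler_wpM2r //.
  have : 0 <= mu * q by rewrite mulr_ge0 // mulr_ge0 ?ler0n.
  lra.
rewrite -(ler_pM2r (_ : 0 < M ^+ 2 / 4)); last by rewrite divr_gt0 ?exprn_gt0.
by rewrite (_ : _ * _ * (M ^+ 2 / 4) = M / 2 * W) //; field; rewrite gt_eqF.
Qed.

Lemma prob_front_lt T : (T <= N)%N -> (2 * T <= m ^ 2)%N ->
  1 - 2 / m%:R <= prob G (fun f : {ffun 'I_N -> {ffun 'I_n -> 'I_n}} => front f T < m)%N.
Proof. by move=> le_TN le_2T_m2; apply: prob_ge_compl; apply: card_front_tail. Qed.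

End Moments.

End Chain.

Theorem mainTheorem10 (n : nat) (hn : (4 <= n)%N) (heven : ~~ odd n) :
  1 - 8%:R / n%:R <= prob (@GE n) (@slow_event n).
Proof.
case: n hn heven => [//|k]; rewrite ltnS /= negbK => k_ge3 k_odd.
set m := k.+1./2; set T := ((k.+1 ^ 2).-1 %/ 8)%N.
have n_eq : k.+1 = (2 * m)%N by have := odd_double_half k; rewrite k_odd /m; lia.
have le_T_n2 : (T <= k.+1 ^ 2)%N by apply: leq_trans (leq_div _ _) (leq_pred _).
have le_2T_m2 : (2 * T <= m ^ 2)%N.
  have : (8 * T <= (k.+1 ^ 2).-1)%N by rewrite mulnC leq_divM.
  rewrite n_eq; lia.
apply: le_trans _ (le_trans (prob_front_lt k_ge3 k_odd le_T_n2 le_2T_m2)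
                            (prob_mono (@slow_of_front k k_ge3))).
have m_gt0 : 0 < m%:R :> rat by rewrite ltr0n; lia.
have n_R : k.+1%:R = 2 * m%:R :> rat by rewrite n_eq natrM.
rewrite -/m n_R (_ : 8%:R / (2 * m%:R) = 4 / m%:R :> rat); last by field; rewrite gt_eqF.
by rewrite lerD2l lerN2 ler_wpM2r ?invr_ge0 ?ler0n ?ler_nat.
Qed.
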